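(* Fix $(\varepsilon,\delta)\in(0,1)\times(0,\delta_0]$ and suppose $(R_1,R_2)\in\mathcal S^\ast(\varepsilon,\delta|p_{X_1X_2},p_{K_1K_2})$. Then for every $\gamma>0$ there exists $n_0=n_0(\gamma)$ such that for all $n\ge n_0$, $$R_i\le H(K_i)+2\gamma+\zeta_n(\gamma,\varepsilon,\delta),\quad i=1,2.$$
   Context: All logarithms are base 2. $\mathcal X_1,\mathcal X_2$ are finite fields. $(X_1,X_2)$ has joint pmf $p_{X_1X_2}$ on $\mathcal X_1\times\mathcal X_2$ and $(K_1,K_2)$ has joint pmf $p_{K_1K_2}$ on $\mathcal X_1\times\mathcal X_2$. For block length $n$, $(\mathbf X_1,\mathbf X_2)$ is i.i.d. with law $p^n_{X_1X_2}$ (source), $(\mathbf K_1,\mathbf K_2)$ is i.i.d. with law $p^n_{K_1K_2}$ (keys), and the keys are independent of the sources. A distributed source encryption system at block length $n$ consists of finite sets $\mathcal C_i^{(n)}$, encryption maps $\Phi_i^{(n)}:\mathcal X_i^n\times\mathcal X_i^n\to\mathcal C_i^{(n)}$ (key, plaintext) and a decryption map $\Psi^{(n)}:\mathcal X_1^n\times\mathcal X_2^n\times\mathcal C_1^{(n)}\times\mathcal C_2^{(n)}\to\mathcal X_1^n\times\mathcal X_2^n$, such that there exist maps $\phi_i^{(n)}:\mathcal X_i^n\to\mathcal M_i^{(n)}$ (finite $\mathcal M_i^{(n)}$) and $\psi^{(n)}$ with $\Psi^{(n)}(\mathbf k_1,\mathbf k_2,\Phi_1^{(n)}(\mathbf k_1,\mathbf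 x_1),\Phi_2^{(n)}(\mathbf k_2,\mathbf x_2))=\psi^{(n)}(\phi_1^{(n)}(\mathbf x_1),\phi_2^{(n)}(\mathbf x_2))$ for all keys and plaintexts. Ciphertexts: $C_i^{(n)}=\Phi_i^{(n)}(\mathbf K_i,\mathbf X_i)$. Correct decoding set $\mathcal D^{(n)}:=\{(\mathbf x_1,\mathbf x_2):\psi^{(n)}(\phi_1^{(n)}(\mathbf x_1),\phi_2^{(n)}(\mathbf x_2))=(\mathbf x_1,\mathbf x_2)\}$; error probability $p_{\rm e}:=\Pr[(\mathbf X_1,\mathbf X_2)\notin\mathcal D^{(n)}]$. Fix a constant $\delta_0>0$. For $(\varepsilon,\delta)\in(0,1)\times[0,\delta_0]$, $(R_1,R_2)$ is an $(\varepsilon,\delta)$-reliable and secure rate pair if there is a sequence of systems $\{(\Phi_1^{(n)},\Phi_2^{(n)},\Psi^{(n)})\}_{n\ge1}$ such that for every $\gamma>0$ there is $n_0$ with, for all $n\ge n_0$: $\frac1n\log|\mathcal C_i^{(n)}|\le R_i+\gamma$ ($i=1,2$), $p_{\rm e}\le\varepsilon$, and $I(C_1^{(n)}C_2^{(n)};\mathbf X_1\mathbf X_2)\le\delta$. $\mathcal R^\ast(\varepsilon,\delta|p_{X_1X_2},p_{K_1K_2})$ is the set of such pairs and $\mathcal S^\ast(\varepsilon,\delta|p_{X_1X_2},p_{K_1K_2}):=\mathcal R^\ast(\varepsilon,\delta|p_{X_1X_2},p_{K_1K_2})\cap\{(R_1,R_2):R_1+R_2=H(X_1X_2)\}$. For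 $\gamma>0$ let $\tilde{\mathcal A}^{(n)}_\gamma$ be the set of $(\mathbf x_1,\mathbf x_2)\in\mathcal X_1^n\times\mathcal X_2^n$ with $\bigl|\frac1n\log\frac1{p^n_{X_i|X_{3-i}}(\mathbf x_i|\mathbf x_{3-i})}-H(X_i|X_{3-i})\bigr|\le\gamma$ for $i=1,2$ and $\bigl|\frac1n\log\frac1{p^n_{X_1X_2}(\mathbf x_1,\mathbf x_2)}-H(X_1X_2)\bigr|\le\gamma$. Set $\nu_n(\gamma):=p^n_{X_1X_2}((\tilde{\mathcal A}^{(n)}_\gamma)^c)$, $\nu_n(\gamma,\varepsilon):=\nu_n(\gamma)+\varepsilon$, and $\zeta_n(\gamma,\varepsilon,\delta):=\frac1n\Bigl[\frac{\delta}{1-\nu_n(\gamma,\varepsilon)}+\log\frac1{1-\nu_n(\gamma,\varepsilon)}\Bigr]$. *)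

From HB Require Import structures.
From mathcomp Require Import all_boot all_order all_algebra.
From mathcomp Require Import reals exp.
Set Implicit Arguments. Unset Strict Implicit. Unset Printing Implicit Defensive.
Import Order.TTheory GRing.Theory Num.Theory.
Local Open Scope ring_scope.

Notation vec T n := {ffun 'I_n -> T}.

Section Info.
Variable R : realType.

Definition log2 (x : R) : R := ln x / ln 2.

Definition is_pmf2 (A B : finType) (p : A -> B -> R) : Prop :=
  (forall a b, 0 <= p a b) /\ \sum_(a : A) \sum_(b : B) p a b = 1.

Definition marg1 (A B : finType) (p : A -> B -> R) (a : A) : R := \sum_(b : B) p a b.
Definition marg2 (A B : finType) (p : A -> B -> R) (b : B) : R := \sum_(a : A) p a b.

(* Shannon entropy (0 log 0 = 0) *)
Definition entropy (A : finType) (q : A -> R) : R :=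
  - \sum_(a : A | q a != 0) q a * log2 (q a).

Definition joint_entropy (A B : finType) (p : A -> B -> R) : R :=
  - \sum_(a : A) \sum_(b : B | p a b != 0) p a b * log2 (p a b).

(* H(X1|X2) and H(X2|X1) *)
Definition cond_entropy12 (A B : finType) (p : A -> B -> R) : R :=
  - \sum_(a : A) \sum_(b : B | p a b != 0) p a b * log2 (p a b / marg2 p b).
Definition cond_entropy21 (A B : finType) (p : A -> B -> R) : R :=
  - \sum_(a : A) \sum_(b : B | p a b != 0) p a b * log2 (p a b / marg1 p a).

Definition mutinf (A B : finType) (P : A -> B -> R) : R :=
  \sum_(a : A) \sum_(b : B | P a b != 0)
     P a b * log2 (P a b / (marg1 P a * marg2 P b)).

Definition pn (A B : finType) (p : A -> B -> R) (n : nat)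
  (x1 : vec A n) (x2 : vec B n) : R := \prod_(i < n) p (x1 i) (x2 i).

Definition pn_cond12 (A B : finType) (p : A -> B -> R) (n : nat)
  (x1 : vec A n) (x2 : vec B n) : R :=
  \prod_(i < n) (p (x1 i) (x2 i) / marg2 p (x2 i)).
Definition pn_cond21 (A B : finType) (p : A -> B -> R) (n : nat)
  (x1 : vec A n) (x2 : vec B n) : R :=
  \prod_(i < n) (p (x1 i) (x2 i) / marg1 p (x1 i)).

(* the set \tilde A^(n)_gamma (membership requires p^n(x1,x2) > 0, since
   otherwise log(1/p) = +oo and the defining inequalities fail) *)
Definition typical (A B : finType) (p : A -> B -> R) (n : nat) (gamma : R)
  (x1 : vec A n) (x2 : vec B n) : bool :=
  [&& 0 < pn p x1 x2,
      `| n%:R^-1 * log2 (pn_cond12 p x1 x2)^-1 - cond_entropy12 p | <= gamma,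
      `| n%:R^-1 * log2 (pn_cond21 p x1 x2)^-1 - cond_entropy21 p | <= gamma &
      `| n%:R^-1 * log2 (pn p x1 x2)^-1 - joint_entropy p | <= gamma].

Definition nu (A B : finType) (p : A -> B -> R) (n : nat) (gamma : R) : R :=
  \sum_(x1 : vec A n) \sum_(x2 : vec B n | ~~ typical p gamma x1 x2) pn p x1 x2.

Definition nu_eps (A B : finType) (p : A -> B -> R) (n : nat) (gamma eps : R) : R :=
  nu p n gamma + eps.

Definition zeta (A B : finType) (p : A -> B -> R) (n : nat) (gamma eps delta : R) : R :=
  n%:R^-1 * (delta / (1 - nu_eps p n gamma eps) + log2 (1 - nu_eps p n gamma eps)^-1).

End Info.

Unset Implicit Arguments.
(* distributed source encryption system at block length n *)
Record system (X1 X2 : finType) (n : nat) := System {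
  C1 : finType; C2 : finType;
  Phi1 : vec X1 n -> vec X1 n -> C1;   (* key, plaintext *)
  Phi2 : vec X2 n -> vec X2 n -> C2;
  Psi : vec X1 n -> vec X2 n -> C1 -> C2 -> (vec X1 n * vec X2 n)%type;
  M1 : finType; M2 : finType;
  phi1 : vec X1 n -> M1; phi2 : vec X2 n -> M2;
  psi : M1 -> M2 -> (vec X1 n * vec X2 n)%type;
  factorization : forall k1 k2 x1 x2,
    Psi k1 k2 (Phi1 k1 x1) (Phi2 k2 x2) = psi (phi1 x1) (phi2 x2)
}.
Arguments C1 {X1 X2 n}. Arguments C2 {X1 X2 n}.
Arguments Phi1 {X1 X2 n}. Arguments Phi2 {X1 X2 n}. Arguments Psi {X1 X2 n}.
Arguments M1 {X1 X2 n}. Arguments M2 {X1 X2 n}.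
Arguments phi1 {X1 X2 n}. Arguments phi2 {X1 X2 n}. Arguments psi {X1 X2 n}.
Set Implicit Arguments.

Section Sys.
Variable R : realType.
Variables (X1 X2 : finType).

Definition err_prob (n : nat) (S : system X1 X2 n) (pX : X1 -> X2 -> R) : R :=
  \sum_(x1 : vec X1 n) \sum_(x2 : vec X2 n | psi S (phi1 S x1) (phi2 S x2) != (x1, x2))
     pn pX x1 x2.

(* joint pmf of ((C1,C2),(X1,X2)), keys independent of sources *)
Definition cipher_joint (n : nat) (S : system X1 X2 n) (pX pK : X1 -> X2 -> R)
  (c : (C1 S * C2 S)%type) (x : (vec X1 n * vec X2 n)%type) : R :=
  \sum_(k1 : vec X1 n) \sum_(k2 : vec X2 n)
     pn pK k1 k2 * pn pX x.1 x.2 *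
     ((Phi1 S k1 x.1 == c.1) && (Phi2 S k2 x.2 == c.2))%:R.

Definition leakage (n : nat) (S : system X1 X2 n) (pX pK : X1 -> X2 -> R) : R :=
  mutinf (@cipher_joint n S pX pK).

Definition reliable_secure (pX pK : X1 -> X2 -> R) (eps delta R1 R2 : R) : Prop :=
  exists sys : forall n, system X1 X2 n,
    forall gamma : R, 0 < gamma -> exists n0 : nat, forall n : nat, (n0 <= n)%N ->
      [/\ n%:R^-1 * log2 #|C1 (sys n)|%:R <= R1 + gamma,
          n%:R^-1 * log2 #|C2 (sys n)|%:R <= R2 + gamma,
          err_prob (sys n) pX <= eps &
          leakage (sys n) pX pK <= delta].

Definition in_Sstar (pX pK : X1 -> X2 -> R) (eps delta R1 R2 : R) : Prop :=
  reliable_secure pX pK eps delta R1 R2 /\ R1 + R2 = joint_entropy pX.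

End Sys.

From HB Require Import structures.
From mathcomp Require Import all_boot all_order all_algebra.
From mathcomp Require Import reals exp.
From mathcomp Require Import ring lra.
From mathcomp Require boolp.
Set Implicit Arguments. Unset Strict Implicit. Unset Printing Implicit Defensive.
Import Order.TTheory GRing.Theory Num.Theory.
Local Open Scope ring_scope.

(* A typical, correctly decoded
   source block [x] has [-log p(x) >= n (H(X1 X2) - gamma)], and such blocks
   carry probability at least [1 - nu - eps].  Knowing the first key and both
   ciphertexts, a correctly decoded block is determined by the second
   ciphertext under a fixed key, so at most [#|C2|] candidates remain; a
   Fano-type bound then gives
     n (H - gamma) <= delta / (1 - nu - eps) + log (1 / (1 - nu - eps))
                      + n H(K1) + log #|C2|.
   Since [log #|C2| <= n (R2 + gamma)] and [R1 + R2 = H], this bounds [R1];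
   [R2] is symmetric.  Chebyshev's inequality makes [nu] small for large [n]. *)

Section LnFacts.
Variable R : realType.
Implicit Types u v w y : R.

Lemma ln_le_subr1 y : 0 < y -> ln y <= y - 1.
Proof. by move=> y0; have := @le_ln1Dx R (y - 1); rewrite [1 + _]addrC subrK; apply; lra. Qed.

Lemma ln2_gt0 : 0 < ln (2 : R).
Proof. by apply: ln_gt0; rewrite ltr1n. Qed.

Lemma mul_ln_div_le_subr u v : 0 <= u -> 0 <= v -> (0 < u -> 0 < v) ->
  u * ln (v / u) <= v - u.
Proof.
move=> u0 v0 uv; have [->|u_neq0] := eqVneq u 0; first by rewrite mul0r subr0.
have up : 0 < u by rewrite lt_def u_neq0 u0.
have := ln_le_subr1 (divr_gt0 (uv up) up); rewrite -(ler_pM2l up) => /le_trans; apply.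
by rewrite mulrBr mulr1 mulrCA divff ?mulr1 // gt_eqF.
Qed.

Lemma subr_le_mul_ln_div u v : 0 <= u -> 0 <= v -> (0 < u -> 0 < v) ->
  u - v <= u * ln (u / v).
Proof.
move=> u0 v0 uv; have [->|u_neq0] := eqVneq u 0; first by rewrite mul0r sub0r oppr_le0.
have up : 0 < u by rewrite lt_def u_neq0 u0.
have := mul_ln_div_le_subr u0 v0 uv.
by rewrite -[u / v]invf_div lnV ?posrE ?divr_gt0 ?uv //; lra.
Qed.

(* Rescaling by [w] before applying [ln y <= y - 1]. *)
Lemma mul_ln_div_le_scaled u v w : 0 < u -> 0 < v -> 0 < w ->
  u * ln (v / u) <= u * ln w + v / w - u.
Proof.
move=> up vp wp.
have vwp : 0 < v / w by rewrite divr_gt0.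
have := mul_ln_div_le_subr (ltW up) (ltW vwp) (fun _ => vwp).
have -> : ln (v / u) = ln w + ln (v / w / u).
  by rewrite -lnM ?posrE ?divr_gt0 //; congr ln; field; rewrite !gt_eqF.
rewrite mulrDr; lra.
Qed.

Lemma ln_prod (I : finType) (P : pred I) (F : I -> R) :
  (forall i, P i -> 0 < F i) -> ln (\prod_(i | P i) F i) = \sum_(i | P i) ln (F i).
Proof.
move=> Fp.
suff [] : 0 < \prod_(i | P i) F i /\ ln (\prod_(i | P i) F i) = \sum_(i | P i) ln (F i) by [].
apply: (big_rec2 (fun y1 y2 => 0 < y1 /\ ln y1 = y2)); first by rewrite ln1.
move=> i y1 y2 Pi [y1p <-]; split; first by rewrite mulr_gt0 ?Fp.
by rewrite lnM ?posrE ?Fp.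
Qed.

Lemma ler_sum_term (I : finType) (F : I -> R) i :
  (forall j, 0 <= F j) -> F i <= \sum_j F j.
Proof. by move=> F0; rewrite (bigD1 i) //= lerDl sumr_ge0. Qed.

Lemma sum_indicator_le_card (T : finType) (P b : pred T) (D : {set T}) :
  (forall x, P x -> b x -> x \in D) -> \sum_(x | P x) ((b x)%:R : R) <= #|D|%:R.
Proof.
move=> sub_D; rewrite -sum1_card natr_sum big_mkcond [X in _ <= X]big_mkcond /=.
apply: ler_sum => x _; case Px: (P x); case bx: (b x); rewrite ?(sub_D x Px bx) //.
all: by case: (x \in D).
Qed.
End LnFacts.

Section KeyedChannel.
Variables (R : realType) (K X C : finType).
Variables (q : K -> R) (p : X -> R) (enc : K -> X -> C).
Hypotheses (q_ge0 : forall k, 0 <= q k) (q_sum1 : \sum_k q k = 1).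
Hypotheses (p_ge0 : forall x, 0 <= p x) (p_sum1 : \sum_x p x = 1).

Definition joint_cx c x : R := \sum_k q k * p x * (enc k x == c)%:R.
Definition pmf_c c : R := \sum_x joint_cx c x.
Definition info_at x : R :=
  \sum_c joint_cx c x * ln (joint_cx c x / (pmf_c c * p x)).
Definition info_cx : R :=
  \sum_c \sum_x joint_cx c x * ln (joint_cx c x / (pmf_c c * p x)).

Lemma sum_indicator_eq1 (y : C) : \sum_c ((y == c)%:R : R) = 1.
Proof. by rewrite (bigD1 y) //= eqxx big1 ?addr0 // => c; rewrite eq_sym => /negbTE ->. Qed.

Lemma joint_cx_ge0 c x : 0 <= joint_cx c x.
Proof. by apply: sumr_ge0 => k _; rewrite !mulr_ge0. Qed.

Lemma pmf_c_ge0 c : 0 <= pmf_c c.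
Proof. by apply: sumr_ge0 => x _; apply: joint_cx_ge0. Qed.

Lemma sum_joint_cx x : \sum_c joint_cx c x = p x.
Proof.
rewrite /joint_cx exchange_big /=.
under eq_bigr do rewrite -big_distrr /= sum_indicator_eq1 mulr1.
by rewrite -big_distrl /= q_sum1 mul1r.
Qed.

Lemma sum_pmf_c : \sum_c pmf_c c = 1.
Proof. by rewrite /pmf_c exchange_big /=; under eq_bigr do rewrite sum_joint_cx. Qed.

Lemma joint_cx_le_p c x : joint_cx c x <= p x.
Proof.
rewrite -sum_joint_cx.
by apply: (ler_sum_term (F := joint_cx^~ x)) => c'; apply: joint_cx_ge0.
Qed.

Lemma joint_cx_le_pmf_c c x : joint_cx c x <= pmf_c c.
Proof. by apply: (ler_sum_term (F := joint_cx c)) => x'; apply: joint_cx_ge0. Qed.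

Lemma info_cxE : info_cx = \sum_x info_at x.
Proof. by rewrite /info_cx exchange_big. Qed.

(* Gibbs: [info_at x] is [p x] times a divergence between distributions on [C]. *)
Lemma info_at_ge0 x : 0 <= info_at x.
Proof.
apply: le_trans (_ : \sum_c (joint_cx c x - pmf_c c * p x) <= _).
  by rewrite sumrB sum_joint_cx -big_distrl /= sum_pmf_c mul1r subrr.
apply: ler_sum => c _; apply: subr_le_mul_ln_div.
- exact: joint_cx_ge0.
- by rewrite mulr_ge0 ?pmf_c_ge0.
- move=> Jp; rewrite mulr_gt0 //; first exact: lt_le_trans Jp (joint_cx_le_pmf_c c x).
  exact: lt_le_trans Jp (joint_cx_le_p c x).
Qed.

Lemma p_neg_ln_split x : p x * - ln (p x) =
  \sum_c joint_cx c x * ln (pmf_c c / joint_cx c x) + info_at x.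
Proof.
rewrite /info_at -{1}sum_joint_cx big_distrl -big_split; apply: eq_bigr => c _ /=.
have [->|J_neq0] := eqVneq (joint_cx c x) 0; first by rewrite !mul0r addr0.
have Jp : 0 < joint_cx c x by rewrite lt_def J_neq0 joint_cx_ge0.
have Pp := lt_le_trans Jp (joint_cx_le_pmf_c c x).
have pp := lt_le_trans Jp (joint_cx_le_p c x).
rewrite -mulrDr -lnM ?posrE ?divr_gt0 ?mulr_gt0 // -lnV ?posrE //.
by congr (_ * ln _); field; rewrite !gt_eqF.
Qed.

Variables (A : finType) (part : K -> A).

Definition joint_acx a c x : R :=
  \sum_(k | part k == a) q k * p x * (enc k x == c)%:R.
Definition pmf_a a : R := \sum_(k | part k == a) q k.

Lemma joint_acx_ge0 a c x : 0 <= joint_acx a c x.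
Proof. by apply: sumr_ge0 => k _; rewrite !mulr_ge0. Qed.

Lemma pmf_a_ge0 a : 0 <= pmf_a a.
Proof. exact: sumr_ge0. Qed.

Lemma joint_cx_part c x : joint_cx c x = \sum_a joint_acx a c x.
Proof. exact: (partition_big part predT). Qed.

Lemma sum_joint_acx a x : \sum_c joint_acx a c x = pmf_a a * p x.
Proof.
rewrite /joint_acx exchange_big /= /pmf_a big_distrl /=.
by apply: eq_bigr => k _; rewrite -big_distrr /= sum_indicator_eq1 mulr1.
Qed.

Lemma sum_pmf_a : \sum_a pmf_a a = 1.
Proof. by rewrite /pmf_a -q_sum1 (partition_big part predT). Qed.

Lemma joint_acx_le_cx a c x : joint_acx a c x <= joint_cx c x.
Proof.
rewrite joint_cx_part.
by apply: (ler_sum_term (F := fun a' => joint_acx a' c x)) => a'; apply: joint_acx_ge0.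
Qed.

Lemma joint_acx_le_pmf_a a c x : joint_acx a c x <= pmf_a a * p x.
Proof.
rewrite -sum_joint_acx.
by apply: (ler_sum_term (F := fun c' => joint_acx a c' x)) => c'; apply: joint_acx_ge0.
Qed.

Lemma mul_ln_pmf_c_refine c x :
  joint_cx c x * ln (pmf_c c / joint_cx c x) <=
  \sum_a joint_acx a c x * ln (pmf_c c / joint_acx a c x).
Proof.
rewrite {1}joint_cx_part big_distrl /=; apply: ler_sum => a _.
have [->|J_neq0] := eqVneq (joint_acx a c x) 0; first by rewrite !mul0r.
have Jp : 0 < joint_acx a c x by rewrite lt_def J_neq0 joint_acx_ge0.
have Jcp := lt_le_trans Jp (joint_acx_le_cx a c x).
have Pp := lt_le_trans Jcp (joint_cx_le_pmf_c c x).
apply: ler_wpM2l; first exact: ltW.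
rewrite ler_ln ?posrE ?divr_gt0 //.
apply: ler_wpM2l; first exact: ltW.
by rewrite lef_pV2 ?posrE // joint_acx_le_cx.
Qed.

Lemma mul_ln_pmf_c_le_scaled (w : R) a c x : 0 < w ->
  joint_acx a c x * ln (pmf_c c / joint_acx a c x) <=
  joint_acx a c x * (ln w - 1 - ln (pmf_a a))
  + (joint_acx a c x != 0)%:R * (pmf_c c * pmf_a a / w).
Proof.
move=> wp; have [->|J_neq0] := eqVneq (joint_acx a c x) 0; first by rewrite !mul0r addr0.
have Jp : 0 < joint_acx a c x by rewrite lt_def J_neq0 joint_acx_ge0.
have Pp := lt_le_trans (lt_le_trans Jp (joint_acx_le_cx a c x)) (joint_cx_le_pmf_c c x).
have qp : 0 < pmf_a a.
  rewrite lt_def pmf_a_ge0 andbT; apply: contraTneq (joint_acx_le_pmf_a a c x) => ->.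
  by rewrite mul0r -ltNge.
have -> : ln (pmf_c c / joint_acx a c x) =
    ln (pmf_c c * pmf_a a / joint_acx a c x) - ln (pmf_a a).
  rewrite -ln_div ?posrE ?divr_gt0 ?mulr_gt0 //; congr ln; field.
  by rewrite !gt_eqF.
rewrite mul1r !mulrBr; have := mul_ln_div_le_scaled Jp (mulr_gt0 Pp qp) wp; lra.
Qed.

Section ListSize.
Variables (T : pred X) (N : nat).
Hypothesis N_gt0 : (0 < N)%N.
Hypothesis list_size : forall a c,
  \sum_(x | T x) ((joint_acx a c x != 0)%:R : R) <= N%:R.

Lemma sum_joint_acx_mul (f : A -> R) :
  \sum_(x | T x) \sum_c \sum_a joint_acx a c x * f a =
  (\sum_(x | T x) p x) * \sum_a pmf_a a * f a.
Proof.
rewrite big_distrl /=; apply: eq_bigr => x _; rewrite exchange_big big_distrr /=.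
by apply: eq_bigr => a _; rewrite -big_distrl /= sum_joint_acx mulrAC mulrC.
Qed.

Lemma sum_indicator_weighted_le (w : R) : 0 < w ->
  \sum_(x | T x) \sum_c \sum_a
    (joint_acx a c x != 0)%:R * (pmf_c c * pmf_a a / w) <= N%:R / w.
Proof.
move=> wp; rewrite exchange_big /=.
apply: le_trans (_ : \sum_c \sum_a N%:R * (pmf_c c * pmf_a a / w) <= _).
  apply: ler_sum => c _; rewrite exchange_big /=; apply: ler_sum => a _.
  rewrite -big_distrl /= ler_wpM2r ?list_size //.
  by rewrite divr_ge0 ?mulr_ge0 ?pmf_c_ge0 ?pmf_a_ge0 ?(ltW wp).
have E c a : N%:R * (pmf_c c * pmf_a a / w) = pmf_c c * (pmf_a a * (N%:R / w)).
  by rewrite mulrCA -!mulrA.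
under eq_bigr do under eq_bigr do rewrite E.
under eq_bigr do rewrite -big_distrr -big_distrl /= sum_pmf_a mul1r.
by rewrite -big_distrl /= sum_pmf_c mul1r.
Qed.

(* A Fano-type bound: given the key part and the ciphertext, [T] leaves at
   most [N] candidates for the message. *)
Lemma cond_entropy_list_bound : 0 < \sum_(x | T x) p x ->
  \sum_(x | T x) \sum_c joint_cx c x * ln (pmf_c c / joint_cx c x) <=
  (\sum_(x | T x) p x) * (ln N%:R - ln (\sum_(x | T x) p x))
  - (\sum_(x | T x) p x) * \sum_a pmf_a a * ln (pmf_a a).
Proof.
set PT := \sum_(x | T x) p x => PTp.
set w := N%:R / PT.
have wp : 0 < w by rewrite divr_gt0 // ltr0n.
apply: le_trans (_ : \sum_(x | T x) \sum_c \sum_a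
    (joint_acx a c x * (ln w - 1 - ln (pmf_a a))
     + (joint_acx a c x != 0)%:R * (pmf_c c * pmf_a a / w)) <= _).
  apply: ler_sum => x _; apply: ler_sum => c _.
  apply: le_trans (mul_ln_pmf_c_refine c x) _.
  by apply: ler_sum => a _; apply: mul_ln_pmf_c_le_scaled.
under eq_bigr do under eq_bigr do rewrite big_split.
under eq_bigr do rewrite big_split.
rewrite big_split /= sum_joint_acx_mul.
have := sum_indicator_weighted_le wp.
have -> : N%:R / w = PT by rewrite /w invf_div mulrCA divff ?mulr1 // pnatr_eq0 -lt0n.
rewrite -/PT (eq_bigr (fun a => pmf_a a * (ln w - 1) - pmf_a a * ln (pmf_a a))).
  rewrite sumrB -big_distrl /= sum_pmf_a mul1r /w ln_div ?posrE ?ltr0n //.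
  rewrite !mulrBr; lra.
by move=> a _; rewrite mulrBr.
Qed.

Lemma mass_neg_ln_bound (h : R) : (forall x, T x -> h <= - ln (p x)) ->
  (\sum_(x | T x) p x) * h <=
  - (\sum_(x | T x) p x) * ln (\sum_(x | T x) p x) + info_cx
  - (\sum_(x | T x) p x) * \sum_a pmf_a a * ln (pmf_a a)
  + (\sum_(x | T x) p x) * ln N%:R.
Proof.
move=> h_le; set PT := \sum_(x | T x) p x.
have info_cx_ge0 : 0 <= info_cx.
  by rewrite info_cxE sumr_ge0 // => x _; apply: info_at_ge0.
have [PT0|PT_neq0] := eqVneq PT 0; first by rewrite PT0 !(mul0r, oppr0, subr0, addr0, add0r).
have PTp : 0 < PT by rewrite lt_def PT_neq0 sumr_ge0.
have info_T : \sum_(x | T x) info_at x <= info_cx.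
  by rewrite info_cxE [X in _ <= X](bigID T) /= lerDl sumr_ge0 // => x _; apply: info_at_ge0.
have : PT * h <= \sum_(x | T x) p x * - ln (p x).
  by rewrite big_distrl; apply: ler_sum => x Tx; rewrite ler_wpM2l ?h_le.
under eq_bigr do rewrite p_neg_ln_split.
rewrite big_split /=; have := cond_entropy_list_bound PTp; rewrite -/PT.
rewrite mulrBr mulNr; lra.
Qed.

End ListSize.

End KeyedChannel.

Section IidVectors.
Variables (R : realType) (A B : finType) (n : nat).

Lemma sum_vec2_prod (F : 'I_n -> A -> B -> R) :
  \sum_(x1 : vec A n) \sum_(x2 : vec B n) \prod_i F i (x1 i) (x2 i) =
  \prod_i \sum_a \sum_b F i a b.
Proof.
rewrite (eq_bigr (fun x1 : vec A n => \prod_i \sum_b F i (x1 i) b)); last first.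
  by move=> x1 _; rewrite (bigA_distr_bigA (fun i b => F i (x1 i) b)).
by rewrite -(bigA_distr_bigA (fun i a => \sum_b F i a b)).
Qed.

Lemma sum_vec_prod_coord (m G : A -> R) (i : 'I_n) : \sum_a m a = 1 ->
  \sum_(x : vec A n) (\prod_j m (x j)) * G (x i) = \sum_a m a * G a.
Proof.
move=> m1.
pose F (l : 'I_n) a := m a * (if l == i then G a else 1).
have E x : (\prod_j m (x j)) * G (x i) = \prod_l F l (x l).
  rewrite /F big_split /=; congr (_ * _).
  by rewrite (bigD1 i) //= eqxx big1 ?mulr1 // => l /negbTE ->.
under eq_bigr do rewrite E.
rewrite -(bigA_distr_bigA F) (bigD1 i) //= [X in _ * X]big1 ?mulr1.
  by apply: eq_bigr => a _; rewrite /F eqxx.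
by move=> l /negbTE li; rewrite /F li -[RHS]m1; apply: eq_bigr => a _; rewrite mulr1.
Qed.

Lemma sum_prod_mul_ln_prod (m : A -> R) : (forall a, 0 <= m a) -> \sum_a m a = 1 ->
  \sum_(x : vec A n) (\prod_j m (x j)) * ln (\prod_j m (x j)) =
  n%:R * \sum_a m a * ln (m a).
Proof.
move=> m0 m1.
have E x : (\prod_j m (x j)) * ln (\prod_j m (x j)) =
           \sum_i (\prod_j m (x j)) * ln (m (x i)).
  rewrite -big_distrr /=.
  have [->|M_neq0] := eqVneq (\prod_j m (x j)) 0; first by rewrite !mul0r.
  congr (_ * _); apply: ln_prod => j _.
  rewrite lt_def m0 andbT; apply: contra M_neq0 => /eqP mj.
  by apply/prodf_eq0; exists j => //; rewrite mj.
under eq_bigr do rewrite E.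
rewrite exchange_big /=.
under eq_bigr do rewrite (@sum_vec_prod_coord m (fun a => ln (m a))) //.
by rewrite sumr_const card_ord mulr_natl.
Qed.

Variable p : A -> B -> R.
Hypotheses (p_ge0 : forall a b, 0 <= p a b) (p_sum1 : \sum_a \sum_b p a b = 1).

Lemma pn_ge0 (x1 : vec A n) (x2 : vec B n) : 0 <= pn p x1 x2.
Proof. exact: prodr_ge0. Qed.

Lemma pn_sum1 : \sum_(x1 : vec A n) \sum_(x2 : vec B n) pn p x1 x2 = 1.
Proof.
rewrite /pn (sum_vec2_prod (fun _ a b => p a b)).
by under eq_bigr do rewrite p_sum1; rewrite big1.
Qed.

Lemma pn_marg1 (x1 : vec A n) : \sum_(x2 : vec B n) pn p x1 x2 = \prod_i marg1 p (x1 i).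
Proof. by rewrite /pn -(bigA_distr_bigA (fun i b => p (x1 i) b)). Qed.

Lemma pn_marg2 (x2 : vec B n) : \sum_(x1 : vec A n) pn p x1 x2 = \prod_i marg2 p (x2 i).
Proof. by rewrite /pn -(bigA_distr_bigA (fun i a => p a (x2 i))). Qed.

Lemma pn_moment (i j : 'I_n) (G H : A -> B -> R) :
  \sum_(x1 : vec A n) \sum_(x2 : vec B n)
    pn p x1 x2 * (G (x1 i) (x2 i) * H (x1 j) (x2 j)) =
  if i == j then \sum_a \sum_b p a b * (G a b * H a b)
  else (\sum_a \sum_b p a b * G a b) * (\sum_a \sum_b p a b * H a b).
Proof.
pose F (l : 'I_n) a b :=
  p a b * ((if l == i then G a b else 1) * (if l == j then H a b else 1)).
have E x1 x2 : pn p x1 x2 * (G (x1 i) (x2 i) * H (x1 j) (x2 j)) =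
    \prod_l F l (x1 l) (x2 l).
  rewrite /F big_split /= big_split /=; congr (_ * (_ * _)).
    by rewrite (bigD1 i) //= eqxx big1 ?mulr1 // => l /negbTE ->.
  by rewrite (bigD1 j) //= eqxx big1 ?mulr1 // => l /negbTE ->.
have F_other l : l != i -> l != j -> \sum_a \sum_b F l a b = 1.
  move=> /negbTE li /negbTE lj; rewrite -[RHS]p_sum1 /F li lj.
  by apply: eq_bigr => a _; apply: eq_bigr => b _; rewrite !mulr1.
under eq_bigr do under eq_bigr do rewrite E.
rewrite sum_vec2_prod /F.
have [<-|ij] := eqVneq i j.
  rewrite (bigD1 i) //= eqxx [X in _ * X]big1 ?mulr1 // => l /negbTE li.
  by rewrite -[RHS]p_sum1 li; apply: eq_bigr => a _; apply: eq_bigr => b _; rewrite !mulr1.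
rewrite (bigD1 i) //= (bigD1 j) /=; last by rewrite eq_sym.
rewrite !eqxx (negbTE ij) (eq_sym j i) (negbTE ij) [X in _ * (_ * X)]big1 ?mulr1.
  by congr (_ * _); apply: eq_bigr => a _; apply: eq_bigr => b _; rewrite ?mulr1 ?mul1r.
by move=> l /andP[li lj]; exact: F_other.
Qed.

End IidVectors.

Section Chebyshev.
Variables (R : realType) (A B : finType) (p : A -> B -> R).
Hypotheses (p_ge0 : forall a b, 0 <= p a b) (p_sum1 : \sum_a \sum_b p a b = 1).

Definition mean2 (g : A -> B -> R) : R := \sum_a \sum_b p a b * g a b.
Definition var2 (g : A -> B -> R) : R := \sum_a \sum_b p a b * (g a b - mean2 g) ^+ 2.
Definition sample_dev n (g : A -> B -> R) (x1 : vec A n) (x2 : vec B n) : R :=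
  n%:R^-1 * \sum_i g (x1 i) (x2 i) - mean2 g.

Lemma mean2_centered g : \sum_a \sum_b p a b * (g a b - mean2 g) = 0.
Proof.
under eq_bigr do under eq_bigr do rewrite mulrBr.
under eq_bigr do rewrite sumrB -big_distrl /=.
by rewrite sumrB -big_distrl /= p_sum1 mul1r subrr.
Qed.

(* Independence of the coordinates kills the cross terms of the square. *)
Lemma sum_pn_sample_dev_sqr n g : (0 < n)%N ->
  \sum_(x1 : vec A n) \sum_(x2 : vec B n) pn p x1 x2 * sample_dev g x1 x2 ^+ 2 =
  var2 g / n%:R.
Proof.
move=> n_gt0; set mu := mean2 g; pose g' a b := g a b - mu.
have n_neq0 : (n%:R : R) != 0 by rewrite pnatr_eq0 -lt0n.
have E (x1 : vec A n) (x2 : vec B n) : pn p x1 x2 * sample_dev g x1 x2 ^+ 2 =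
    n%:R^-2 * \sum_i \sum_j pn p x1 x2 * (g' (x1 i) (x2 i) * g' (x1 j) (x2 j)).
  have -> : sample_dev g x1 x2 = n%:R^-1 * \sum_i g' (x1 i) (x2 i).
    by rewrite /sample_dev /g' sumrB sumr_const card_ord -/mu; field.
  rewrite exprMn [(\sum_i _) ^+ 2]expr2 big_distrlr /= mulrCA exprVn; congr (_ * _).
  by rewrite big_distrr; apply: eq_bigr => i _; rewrite big_distrr.
under eq_bigr do under eq_bigr do rewrite E.
under eq_bigr do rewrite -big_distrr /=.
rewrite -big_distrr /=.
under eq_bigr do under eq_bigr do rewrite exchange_big /=.
under eq_bigr do rewrite exchange_big /=.
rewrite exchange_big /=.
under eq_bigr do under eq_bigr do rewrite exchange_big /=.
under eq_bigr do rewrite exchange_big /=.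
under eq_bigr do under eq_bigr do rewrite pn_moment //.
rewrite (eq_bigr (fun _ => var2 g)); last first.
  move=> i _; rewrite (bigD1 i) //= eqxx [X in _ + X]big1 ?addr0.
    by apply: eq_bigr => a _; apply: eq_bigr => b _; rewrite /g' expr2.
  by move=> j; rewrite eq_sym => /negbTE ->; rewrite mean2_centered mul0r.
by rewrite sumr_const card_ord -mulr_natl; field.
Qed.

Definition self_info a b : R := - log2 (p a b).
Definition self_info12 a b : R := - log2 (p a b / marg2 p b).
Definition self_info21 a b : R := - log2 (p a b / marg1 p a).

Lemma oppr_sum_nz_mul (F : A -> B -> R) :
  - \sum_a \sum_(b | p a b != 0) p a b * F a b = \sum_a \sum_b p a b * - F a b.
Proof.
rewrite -sumrN; apply: eq_bigr => a _; rewrite -sumrN big_mkcond /=.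
by apply: eq_bigr => b _; case: eqP => [->|_]; rewrite ?mul0r ?oppr0 ?mulrN.
Qed.

Lemma joint_entropyE : joint_entropy p = mean2 self_info.
Proof. exact: oppr_sum_nz_mul. Qed.

Lemma cond_entropy12E : cond_entropy12 p = mean2 self_info12.
Proof. exact: oppr_sum_nz_mul. Qed.

Lemma cond_entropy21E : cond_entropy21 p = mean2 self_info21.
Proof. exact: oppr_sum_nz_mul. Qed.

Lemma marg1_gt0 a b : 0 < p a b -> 0 < marg1 p a.
Proof. by move=> /lt_le_trans; apply; apply: (ler_sum_term (F := p a)). Qed.

Lemma marg2_gt0 a b : 0 < p a b -> 0 < marg2 p b.
Proof. by move=> /lt_le_trans; apply; apply: (ler_sum_term (F := p^~ b)). Qed.

Section Typicality.
Variables (n : nat) (x1 : vec A n) (x2 : vec B n).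
Hypothesis pn_gt0 : 0 < pn p x1 x2.

Lemma log2_prodV_pn (r : A -> B -> R) : (forall a b, 0 < p a b -> 0 < r a b) ->
  log2 (\prod_i r (x1 i) (x2 i))^-1 = \sum_i - log2 (r (x1 i) (x2 i)).
Proof.
move=> r_gt0.
have p_gt0 i : 0 < p (x1 i) (x2 i).
  rewrite lt_def p_ge0 andbT; apply: contraTneq pn_gt0 => pi0.
  by rewrite /pn (bigD1 i) //= pi0 mul0r ltxx.
rewrite /log2 lnV ?posrE ?prodr_gt0 // => [|i _]; last exact: r_gt0.
rewrite ln_prod => [|i _]; last exact: r_gt0.
by rewrite -sumrN mulr_suml; apply: eq_bigr => i _; rewrite mulNr.
Qed.

Lemma typical_dev0 :
  n%:R^-1 * log2 (pn p x1 x2)^-1 - joint_entropy p = sample_dev self_info x1 x2.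
Proof. by rewrite /pn (log2_prodV_pn (r := p)) // joint_entropyE. Qed.

Lemma typical_dev12 :
  n%:R^-1 * log2 (pn_cond12 p x1 x2)^-1 - cond_entropy12 p =
  sample_dev self_info12 x1 x2.
Proof.
rewrite /pn_cond12 (log2_prodV_pn (r := fun a b => p a b / marg2 p b)) ?cond_entropy12E //.
move=> a b pab.
by rewrite divr_gt0 // (marg2_gt0 pab).
Qed.

Lemma typical_dev21 :
  n%:R^-1 * log2 (pn_cond21 p x1 x2)^-1 - cond_entropy21 p =
  sample_dev self_info21 x1 x2.
Proof.
rewrite /pn_cond21 (log2_prodV_pn (r := fun a b => p a b / marg1 p a)) ?cond_entropy21E //.
move=> a b pab.
by rewrite divr_gt0 // (marg1_gt0 pab).
Qed.

Lemma atypical_le_dev_sqr gamma : 0 < gamma -> ~~ typical p gamma x1 x2 ->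
  gamma ^+ 2 <= sample_dev self_info x1 x2 ^+ 2 + sample_dev self_info12 x1 x2 ^+ 2
                + sample_dev self_info21 x1 x2 ^+ 2.
Proof.
move=> gamma_gt0; rewrite /typical pn_gt0 typical_dev0 typical_dev12 typical_dev21 /=.
have sqr_ge (d : R) : ~~ (`|d| <= gamma) -> gamma ^+ 2 <= d ^+ 2.
  rewrite -ltNge => /ltW gamma_le; rewrite -[d ^+ 2]real_normK ?num_real //.
  by rewrite ler_sqr ?nnegrE ?normr_ge0 ?(ltW gamma_gt0).
have := sqr_ge0 (sample_dev self_info x1 x2).
have := sqr_ge0 (sample_dev self_info12 x1 x2).
have := sqr_ge0 (sample_dev self_info21 x1 x2).
by move=> ? ? ?; case/nandP => [/sqr_ge|/nandP[/sqr_ge|/sqr_ge]]; lra.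
Qed.

End Typicality.

Definition var_info : R := var2 self_info + var2 self_info12 + var2 self_info21.

(* Chebyshev's inequality for the three self-information sample means. *)
Lemma nu_le_var_info n gamma : (0 < n)%N -> 0 < gamma ->
  nu p n gamma <= var_info / (n%:R * gamma ^+ 2).
Proof.
move=> n_gt0 gamma_gt0.
have g2_gt0 : 0 < gamma ^+ 2 by rewrite exprn_gt0.
pose D (x1 : vec A n) (x2 : vec B n) := sample_dev self_info x1 x2 ^+ 2
  + sample_dev self_info12 x1 x2 ^+ 2 + sample_dev self_info21 x1 x2 ^+ 2.
apply: le_trans (_ : \sum_(x1 : vec A n) \sum_(x2 : vec B n)
    pn p x1 x2 * D x1 x2 / gamma ^+ 2 <= _).
  apply: ler_sum => x1 _; rewrite big_mkcond /=; apply: ler_sum => x2 _.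
  have D_ge0 : 0 <= D x1 x2 by rewrite /D !addr_ge0 ?sqr_ge0.
  have := pn_ge0 p_ge0 x1 x2; rewrite le_eqVlt => /orP[/eqP <-|pn_gt0].
    by rewrite !mul0r; case: ifP.
  case: ifP => [atyp|_]; last by apply: divr_ge0; [apply: mulr_ge0; [apply: ltW|] | apply: ltW].
  rewrite -mulrA ler_pMr // ler_pdivlMr // mul1r.
  exact: atypical_le_dev_sqr.
rewrite [X in X <= _](_ : _ = var_info / n%:R / gamma ^+ 2).
  by rewrite [(_ * gamma ^+ 2)^-1]invfM mulrA.
rewrite /var_info !mulrDl -!sum_pn_sample_dev_sqr // -!mulrDl -!big_split big_distrl /=.
apply: eq_bigr => x1 _; rewrite -!big_split big_distrl /=.
by apply: eq_bigr => x2 _; rewrite /D !mulrDr.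
Qed.

Lemma nu_eventually_lt gamma c : 0 < gamma -> 0 < c ->
  exists n1, (0 < n1)%N /\ forall n, (n1 <= n)%N -> nu p n gamma < c.
Proof.
move=> gamma_gt0 c_gt0.
have g2c_gt0 : 0 < gamma ^+ 2 * c by rewrite mulr_gt0 ?exprn_gt0.
exists (Num.truncn (var_info / (gamma ^+ 2 * c))).+1; split => // n n1_le.
have n_gt0 : (0 < n)%N by apply: leq_trans n1_le.
apply: le_lt_trans (nu_le_var_info n_gt0 gamma_gt0) _.
have := truncnS_gt (var_info / (gamma ^+ 2 * c)).
rewrite ltr_pdivrMr // => /lt_le_trans; move/(_ (n%:R * (gamma ^+ 2 * c))).
rewrite ler_pM2r // ler_nat => /(_ n1_le) V_lt.
by rewrite ltr_pdivrMr ?mulr_gt0 ?exprn_gt0 ?ltr0n // [c * _]mulrC -mulrA.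
Qed.

End Chebyshev.

Section PairSums.
Variables (R : realType) (A B : finType).

Lemma sum_pair_fst (F : A * B -> R) a : \sum_(k | k.1 == a) F k = \sum_b F (a, b).
Proof.
rewrite (eq_bigl (fun k : A * B => (k.1 == a) && true)) => [|k]; last by rewrite andbT.
rewrite (eq_bigr (fun k => F (k.1, k.2))) => [|[] //].
by rewrite -(pair_big_dep (pred1 a) (fun _ _ => true) (fun x y => F (x, y))) big_pred1_eq.
Qed.

Lemma sum_pair_snd (F : A * B -> R) b : \sum_(k | k.2 == b) F k = \sum_a F (a, b).
Proof.
rewrite (eq_bigl (fun k : A * B => true && (k.2 == b))) => [|k] //.
rewrite (eq_bigr (fun k => F (k.1, k.2))) => [|[] //].
rewrite -(pair_big_dep xpredT (fun _ y => y == b) (fun x y => F (x, y))).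
by apply: eq_bigr => a _; rewrite big_pred1_eq.
Qed.

Lemma entropy_ln2 (m : A -> R) : entropy m * ln 2 = - \sum_a m a * ln (m a).
Proof.
rewrite /entropy mulNr big_distrl big_mkcond /=; congr (- _); apply: eq_bigr => a _.
case: eqP => [->|_]; first by rewrite !mul0r.
by rewrite /log2 -mulrA mulfVK // gt_eqF // ln2_gt0.
Qed.

End PairSums.

Section PairedVectors.
Variables (R : realType) (A B : finType) (n : nat) (p : A -> B -> R).
Hypotheses (p_ge0 : forall a b, 0 <= p a b) (p_sum1 : \sum_a \sum_b p a b = 1).

Definition pn_pair (k : vec A n * vec B n) : R := pn p k.1 k.2.

Lemma pn_pair_ge0 k : 0 <= pn_pair k.
Proof. exact: pn_ge0. Qed.

Lemma pn_pair_sum1 : \sum_k pn_pair k = 1.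
Proof. by rewrite /pn_pair -(pair_bigA _ (fun k1 k2 => pn p k1 k2)) /= pn_sum1. Qed.

Lemma pmf_a_fst_entropy :
  \sum_a pmf_a pn_pair fst a * ln (pmf_a pn_pair fst a) =
  - (n%:R * entropy (marg1 p) * ln 2).
Proof.
have E a : pmf_a pn_pair fst a = \prod_i marg1 p (a i).
  by rewrite /pmf_a /pn_pair (sum_pair_fst (fun k => pn p k.1 k.2)) pn_marg1.
under eq_bigr do rewrite E.
rewrite sum_prod_mul_ln_prod -?mulrA ?entropy_ln2 ?mulrN ?opprK //.
by move=> a; apply: sumr_ge0.
Qed.

Lemma pmf_a_snd_entropy :
  \sum_b pmf_a pn_pair snd b * ln (pmf_a pn_pair snd b) =
  - (n%:R * entropy (marg2 p) * ln 2).
Proof.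
have E b : pmf_a pn_pair snd b = \prod_i marg2 p (b i).
  by rewrite /pmf_a /pn_pair (sum_pair_snd (fun k => pn p k.1 k.2)) pn_marg2.
under eq_bigr do rewrite E.
rewrite sum_prod_mul_ln_prod -?mulrA ?entropy_ln2 ?mulrN ?opprK //.
  by move=> b; apply: sumr_ge0.
by rewrite /marg2 exchange_big.
Qed.

End PairedVectors.

Section EncryptionSystem.
Variables (R : realType) (X1 X2 : finType) (n : nat) (S : system X1 X2 n).
Variables (pX pK : X1 -> X2 -> R).
Hypotheses (pX_ge0 : forall a b, 0 <= pX a b) (pX_sum1 : \sum_a \sum_b pX a b = 1).
Hypotheses (pK_ge0 : forall a b, 0 <= pK a b) (pK_sum1 : \sum_a \sum_b pK a b = 1).

Local Notation qK := (pn_pair (n := n) pK).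
Local Notation qX := (pn_pair (n := n) pX).

Definition enc_pair (k x : vec X1 n * vec X2 n) : (C1 S * C2 S)%type :=
  (Phi1 S k.1 x.1, Phi2 S k.2 x.2).

Definition decoded (x : vec X1 n * vec X2 n) : bool :=
  psi S (phi1 S x.1) (phi2 S x.2) == x.

Definition typical_decoded gamma (x : vec X1 n * vec X2 n) : bool :=
  typical pX gamma x.1 x.2 && decoded x.

Lemma cipher_jointE :
  cipher_joint (S := S) pX pK = joint_cx qK qX enc_pair.
Proof.
apply: boolp.funext => c; apply: boolp.funext => x.
rewrite /cipher_joint /joint_cx (pair_bigA _ (fun k1 k2 => pn pK k1 k2 * pn pX x.1 x.2 *
   ((Phi1 S k1 x.1 == c.1) && (Phi2 S k2 x.2 == c.2))%:R)) /=.
by apply: eq_bigr => k _; case: c => c1 c2; rewrite /enc_pair xpair_eqE.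
Qed.

Lemma leakage_ln2 :
  leakage S pX pK * ln 2 = info_cx qK qX enc_pair.
Proof.
rewrite /leakage cipher_jointE /mutinf /info_cx big_distrl; apply: eq_bigr => c _.
rewrite [X in X * _ = _]big_mkcond big_distrl /=; apply: eq_bigr => x _.
rewrite /marg1 /marg2 sum_joint_cx ?pn_pair_sum1 //.
case: eqP => [->|_]; first by rewrite !mul0r.
by rewrite /log2 -mulrA mulfVK // gt_eqF // ln2_gt0.
Qed.

Lemma mass_typical_decoded_ge gamma eps : err_prob S pX <= eps ->
  1 - (nu pX n gamma + eps) <= \sum_(x | typical_decoded gamma x) qX x.
Proof.
move=> err_le.
have pairsE (P : pred (vec X1 n * vec X2 n)) : \sum_(x | P x) qX x =
    \sum_(x1 : vec X1 n) \sum_(x2 : vec X2 n) if P (x1, x2) then pn pX x1 x2 else 0.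
  by rewrite pair_bigA big_mkcond; apply: eq_bigr => -[x1 x2].
have nuE : nu pX n gamma = \sum_(x | ~~ typical pX gamma x.1 x.2) qX x.
  by rewrite pairsE; apply: eq_bigr => x1 _; rewrite big_mkcond.
have errE : err_prob S pX = \sum_(x | ~~ decoded x) qX x.
  by rewrite pairsE; apply: eq_bigr => x1 _; rewrite big_mkcond.
have : \sum_x qX x <= \sum_(x | typical_decoded gamma x) qX x
    + \sum_(x | ~~ typical pX gamma x.1 x.2) qX x
    + \sum_(x | ~~ decoded x) qX x.
  rewrite (big_mkcond (typical_decoded gamma)) (big_mkcond (fun x => ~~ typical _ _ _ _)).
  rewrite (big_mkcond (fun x => ~~ decoded x)) -!big_split /=.
  apply: ler_sum => x _; have := pn_pair_ge0 pX_ge0 x.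
  by rewrite /typical_decoded; case: typical; case: decoded => /=; lra.
rewrite pn_pair_sum1 // -nuE -errE; lra.
Qed.

Lemma typical_neg_ln_ge gamma x : (0 < n)%N -> typical pX gamma x.1 x.2 ->
  n%:R * (joint_entropy pX - gamma) * ln 2 <= - ln (qX x).
Proof.
move=> n_gt0 /and4P[pn_gt0 _ _]; rewrite ler_norml => /andP[+ _].
rewrite /log2 lnV ?posrE // => typ.
have ninv_gt0 : 0 < n%:R^-1 :> R by rewrite invr_gt0 ltr0n.
rewrite -ler_pdivlMr ?ln2_gt0 // -(ler_pM2l ninv_gt0) mulrA mulVf ?gt_eqF ?ltr0n //.
by rewrite mul1r /pn_pair; rewrite mulNr in typ; lra.
Qed.

(* A correctly decoded message is determined by one ciphertext component
   together with the other one computed under any fixed key. *)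
Lemma list_size_fst gamma (k2 : vec X2 n) a c :
  \sum_(x | typical_decoded gamma x)
     ((joint_acx qK qX enc_pair fst a c x != 0)%:R : R) <= #|C2 S|%:R.
Proof.
set D := [set x | decoded x && (Phi1 S a x.1 == c.1)].
apply: le_trans (@sum_indicator_le_card _ _ _
  (fun x => joint_acx qK qX enc_pair fst a c x != 0) D _) _.
  move=> x /andP[_ dec] J_neq0; rewrite inE dec /=.
  apply: contraNT J_neq0 => enc_neq; apply/eqP/big1 => k /eqP k1.
  suff -> : (enc_pair k x == c) = false by rewrite mulr0.
  by apply: contraNF enc_neq => /eqP <-; rewrite /enc_pair k1.
rewrite ler_nat -(card_in_imset (f := fun x => Phi2 S k2 x.2)) ?max_card //.
move=> x y; rewrite !inE => /andP[/eqP dx /eqP ex] /andP[/eqP dy /eqP ey] e2.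
rewrite -dx -dy -(factorization _ _ _ S a k2 x.1 x.2).
by rewrite -(factorization _ _ _ S a k2 y.1 y.2) ex ey e2.
Qed.

Lemma list_size_snd gamma (k1 : vec X1 n) b c :
  \sum_(x | typical_decoded gamma x)
     ((joint_acx qK qX enc_pair snd b c x != 0)%:R : R) <= #|C1 S|%:R.
Proof.
set D := [set x | decoded x && (Phi2 S b x.2 == c.2)].
apply: le_trans (@sum_indicator_le_card _ _ _
  (fun x => joint_acx qK qX enc_pair snd b c x != 0) D _) _.
  move=> x /andP[_ dec] J_neq0; rewrite inE dec /=.
  apply: contraNT J_neq0 => enc_neq; apply/eqP/big1 => k /eqP k2.
  suff -> : (enc_pair k x == c) = false by rewrite mulr0.
  by apply: contraNF enc_neq => /eqP <-; rewrite /enc_pair k2.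
rewrite ler_nat -(card_in_imset (f := fun x => Phi1 S k1 x.1)) ?max_card //.
move=> x y; rewrite !inE => /andP[/eqP dx /eqP ex] /andP[/eqP dy /eqP ey] e1.
rewrite -dx -dy -(factorization _ _ _ S k1 b x.1 x.2).
by rewrite -(factorization _ _ _ S k1 b y.1 y.2) ex ey e1.
Qed.

Lemma rate_sum_bound (Kp : finType) (part : vec X1 n * vec X2 n -> Kp) (N : nat)
    (Hk gamma eps delta : R) :
  (0 < n)%N -> (0 < N)%N -> 0 <= delta ->
  (forall a c, \sum_(x | typical_decoded gamma x)
       ((joint_acx qK qX enc_pair part a c x != 0)%:R : R) <= N%:R) ->
  \sum_a pmf_a qK part a * ln (pmf_a qK part a) = - (n%:R * Hk * ln 2) ->
  0 < 1 - (nu pX n gamma + eps) -> err_prob S pX <= eps -> leakage S pX pK <= delta ->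
  n%:R * (joint_entropy pX - gamma) <=
    (delta / (1 - (nu pX n gamma + eps)) + log2 (1 - (nu pX n gamma + eps))^-1)
    + n%:R * Hk + log2 N%:R.
Proof.
move=> n_gt0 N_gt0 delta_ge0 list_size key_ent al_gt0 err_le leak_le.
set al := 1 - _ in al_gt0 *.
set PT := \sum_(x | typical_decoded gamma x) qX x.
have al_le : al <= PT := mass_typical_decoded_ge gamma err_le.
have PT_gt0 : 0 < PT := lt_le_trans al_gt0 al_le.
have ln2_gt0 := @ln2_gt0 R.
have neg_ln_ge x : typical_decoded gamma x ->
    n%:R * (joint_entropy pX - gamma) * ln 2 <= - ln (qX x).
  by case/andP => typ _; exact: typical_neg_ln_ge.
have := mass_neg_ln_bound (pn_pair_ge0 pK_ge0) (pn_pair_sum1 n pK_sum1)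
  (pn_pair_ge0 pX_ge0) (pn_pair_sum1 n pX_sum1) N_gt0 list_size neg_ln_ge.
rewrite -leakage_ln2 key_ent -/PT.
set L2 := ln 2 in ln2_gt0 *; set LN := ln N%:R; set lk := leakage S pX pK.
set h := n%:R * (joint_entropy pX - gamma) * L2 => core.
have h_le : h <= - ln PT + lk * L2 / PT + n%:R * Hk * L2 + LN.
  rewrite -(ler_pM2l PT_gt0); apply: le_trans core _; rewrite le_eqVlt; apply/orP; left.
  by apply/eqP; field; rewrite gt_eqF.
have ln_al_le : ln al <= ln PT by rewrite ler_ln ?posrE.
have lk_le : lk * L2 / PT <= delta / al * L2.
  rewrite mulrAC ler_pM2r // (@le_trans _ _ (delta / PT)) //.
    by rewrite ler_pM2r ?invr_gt0.
  by rewrite ler_wpM2l // lef_pV2 ?posrE.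
rewrite /log2 -/L2 -/LN lnV ?posrE // -(ler_pM2r ln2_gt0).
have -> : (delta / al + - ln al / L2 + n%:R * Hk + LN / L2) * L2 =
    - ln al + delta / al * L2 + n%:R * Hk * L2 + LN.
  by field; rewrite !gt_eqF.
move: h_le; rewrite /h; lra.
Qed.

End EncryptionSystem.

Lemma rate_le_of_sum_bound (R : realType) (m H Hk R1 R2 g u L : R) : 0 < m ->
  m * (H - g) <= u + m * Hk + L -> m^-1 * L <= R2 + g -> R1 + R2 = H ->
  R1 <= Hk + 2 * g + m^-1 * u.
Proof.
move=> m_gt0 sum_le L_le sumR.
rewrite -(ler_pM2l m_gt0) mulrDr mulrA mulfV ?gt_eqF // mul1r mulrDr [m * (2 * g)]mulrCA.
rewrite -(ler_pM2l m_gt0) mulrA mulfV ?gt_eqF // mul1r in L_le.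
by move: sum_le L_le; rewrite -sumR !mulrDr !mulrN; lra.
Qed.

Theorem proposition2 (R : realType) (X1 X2 : finFieldType)
  (pX pK : X1 -> X2 -> R) (hpX : is_pmf2 pX) (hpK : is_pmf2 pK)
  (delta0 : R) (hdelta0 : 0 < delta0)
  (eps delta : R) (heps : 0 < eps < 1) (hdelta : 0 < delta <= delta0)
  (R1 R2 : R) (hS : in_Sstar pX pK eps delta R1 R2) :
  forall gamma : R, 0 < gamma ->
    exists n0 : nat, forall n : nat, (n0 <= n)%N ->
      R1 <= entropy (marg1 pK) + 2 * gamma + zeta pX n gamma eps delta /\
      R2 <= entropy (marg2 pK) + 2 * gamma + zeta pX n gamma eps delta.
Proof.
move=> gamma gamma_gt0.
case: hS => -[sys sys_ok] rate_sum; case: hpX => pX_ge0 pX_sum1; case: hpK => pK_ge0 pK_sum1.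
have [n0 sys_n] := sys_ok gamma gamma_gt0.
have one_eps_gt0 : 0 < 1 - eps by case/andP: heps => _; rewrite subr_gt0.
have [n1 [n1_gt0 nu_lt]] := nu_eventually_lt pX_ge0 pX_sum1 gamma_gt0 one_eps_gt0.
exists (maxn n0 n1) => n; rewrite geq_max => /andP[n0_le n1_le].
have n_gt0 : (0 < n)%N := leq_trans n1_gt0 n1_le.
have [rate1 rate2 err_le leak_le] := sys_n n n0_le.
have al_gt0 : 0 < 1 - (nu pX n gamma + eps) by have := nu_lt n n1_le; lra.
have delta_ge0 : 0 <= delta by case/andP: hdelta => /ltW.
pose k0 (X : finFieldType) : vec X n := [ffun => 0].
have C1_gt0 : (0 < #|C1 (sys n)|)%N by apply/card_gt0P; exists (Phi1 (sys n) (k0 _) (k0 _)).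
have C2_gt0 : (0 < #|C2 (sys n)|)%N by apply/card_gt0P; exists (Phi2 (sys n) (k0 _) (k0 _)).
have sum1 := rate_sum_bound pX_ge0 pX_sum1 pK_ge0 pK_sum1 n_gt0 C2_gt0 delta_ge0
  (list_size_fst pX pK gamma (k0 _)) (pmf_a_fst_entropy n pK_ge0 pK_sum1) al_gt0 err_le leak_le.
have sum2 := rate_sum_bound pX_ge0 pX_sum1 pK_ge0 pK_sum1 n_gt0 C1_gt0 delta_ge0
  (list_size_snd pX pK gamma (k0 _)) (pmf_a_snd_entropy n pK_ge0 pK_sum1) al_gt0 err_le leak_le.
have ltr0n' : (0 : R) < n%:R by rewrite ltr0n.
rewrite /zeta /nu_eps; split; first exact: rate_le_of_sum_bound ltr0n' sum1 rate2 rate_sum.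
by apply: rate_le_of_sum_bound ltr0n' sum2 rate1 _; rewrite addrC.
Qed.
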